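(* (1) If $\upsilon,\upsilon'$ are union gadgets such that the output signature of $\upsilon$ equals the input signature of $\upsilon'$, then there is a union gadget $\mu$ with $\mu(\mathbf A)\cong\upsilon'(\upsilon(\mathbf A))$ for all structures $\mathbf A$ (of the input signature of $\upsilon$). (2) If $\phi,\phi'$ are Datalog interpretations such that the output signature of $\phi$ equals the input signature of $\phi'$, then there is a Datalog interpretation $\psi$ with $\psi(\mathbf A)\cong\phi'(\phi(\mathbf A))$ for all structures $\mathbf A$. (3) If $\upsilon$ is a union gadget and $\phi$ a Datalog interpretation such that the output signature of $\upsilon$ equals the input signature of $\phi$, then there exist a union gadget $\upsilon'$ and a Datalog interpretation $\phi'$ with $\upsilon'(\phi'(\mathbf A))\cong\phi(\upsilon(\mathbf A))$ for all structures $\mathbf A$.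
   Context: Structures. A (multisorted relational) signature consists of a set of types and a set of relation symbols; each symbol $R$ has an arity $\mathrm{ar}_R=(\mathrm{ar}_R(1),\dots,\mathrm{ar}_R(k))$, a tuple of types. A structure $\mathbf A$ of this signature consists of a set $A_t$ for each type $t$ and a relation $R^{\mathbf A}\subseteq A_{\mathrm{ar}_R(1)}\times\dots\times A_{\mathrm{ar}_R(k)}$ for each symbol $R$; elements of different types are considered distinct. Isomorphism $\cong$ is the usual type-preserving isomorphism of structures. Datalog programs. Variables carry types. An atomic $\Delta$-formula is either $R(x_1,\dots,x_n)$ with $R$ a $\Delta$-symbol and $x_i$ of type $\mathrm{ar}_R(i)$, or an equality $x=y$ of same-typed variables. A Datalog program with input signature $\Pi$ consists of a signature $\Delta\supseteq\Pi$ with the same types, a finite set of rules $t_0\leftarrow t_1,\dots,t_r$ ($t_i$ atomic $\Delta$-formulas; the head $t_0$ uses neither a $\Pi$-symbol nor equality), and a designated output symbol, evaluated by least-fixed-point semantics on a $\Pi$-structure; the output is the final interpretation of the output symbol. Its width is the maximum number of variables in a rule. Datalog interpretations. A Datalog interpretation $\phi$ mapping $\Pi$-structures to $\Sigma$-structures consists of a Datalog program $\phi_t$ with input signature $\Pi$ for each $\Sigma$-type $t$, and a Datalog program $\phi_R$ for each $\Sigma$-symbol $R$ of arity $k$, such that the arity of $\phi_R$ is the concatenation of the arities of $\phi_{\mathrm{ar}_R(1)},\dots,\phi_{\mathrm{ar}_R(k)}$. Its output $\phi(\mathbf A)$ has $t$-th domain $\phi_t(\mathbf A)$ (a set of tuples),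 and $(w_1,\dots,w_k)\in R^{\phi(\mathbf A)}$ iff the concatenation of $w_1,\dots,w_k$ lies in $\phi_R(\mathbf A)$. Union gadgets. For signatures $\Pi,\Sigma$, a union gadget $\upsilon=(d,r)$ consists of a map $d$ from $\Pi$-types to $\Sigma$-types and a map $r$ from $\Pi$-symbols to $\Sigma$-symbols with $\mathrm{ar}_{r(R)}=d\circ\mathrm{ar}_R$ for every $\Pi$-symbol $R$. Applied to a $\Pi$-structure $\mathbf A$ (with domains made pairwise disjoint, e.g. by tagging each element with its type), it yields the $\Sigma$-structure $\upsilon(\mathbf A)$ whose $t$-th domain is $\bigcup_{s:\,d(s)=t}A_s$ and with $S^{\upsilon(\mathbf A)}=\bigcup_{R:\,r(R)=S}R^{\mathbf A}$. *)

From mathcomp Require Import all_boot.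
From Stdlib Require List.

Set Implicit Arguments.
Unset Strict Implicit.
Unset Printing Implicit Defensive.

Record signature := Signature {
  sty  : finType;
  ssym : finType;
  sar  : ssym -> seq sty
}.

(** All elements live in one carrier, each element carrying its type
    ([tp]); so elements of different types are distinct, and the t-th
    domain is [{x | tp x = t}]. *)
Record structure (S : signature) := Structure {
  car :> Type;
  tp  : car -> sty S;
  rel : ssym S -> seq car -> Prop;
  rel_typed : forall R xs, rel R xs -> map tp xs = sar R
}.
Arguments tp {S} s _.
Arguments rel {S} s _ _.

Definition iso (S : signature) (A B : structure S) : Prop :=
  exists (f : A -> B) (g : B -> A),
    cancel f g /\ cancel g f /\
    (forall x, tp B (f x) = tp A x) /\
    (forall R xs, rel A R xs <-> rel B R (map f xs)).

Record gadget (P S : signature) := Gadget {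
  gd : sty P -> sty S;
  gr : ssym P -> ssym S;
  gar : forall R, sar (gr R) = map gd (sar R)
}.

Section ApplyGadget.
Variables (P S : signature) (u : gadget P S) (A : structure P).

Definition gadget_rel (R' : ssym S) (xs : seq A) : Prop :=
  exists R, gr u R = R' /\ rel A R xs.

Lemma gadget_rel_typed R' xs :
  gadget_rel R' xs -> map (fun x => gd u (tp A x)) xs = sar R'.
Proof.
move=> [R [<- HR]]; rewrite gar -(rel_typed HR) -map_comp; done.
Qed.

(** υ(A): the t-th domain is the union of the A_s with d(s) = t
    (the A_s being already disjoint), and S^{υ(A)} is the union of the
    R^A with r(R) = S. *)
Definition apply_gadget : structure S :=
  @Structure S A (fun x => gd u (tp A x)) gadget_rel gadget_rel_typed.
End ApplyGadget.

Inductive atom (D : Type) (n : nat) :=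
  | ARel of D & seq 'I_n
  | AEq of 'I_n & 'I_n.

Record rule (D X T : Type) := Rule {
  rn    : nat;
  rvty  : 'I_rn -> T;
  rhead : X * seq 'I_rn;
  rbody : seq (atom D rn)
}.
Arguments rn {D X T} r.
Arguments rvty {D X T} r i.
Arguments rhead {D X T} r.
Arguments rbody {D X T} r.

(** A Datalog program with input signature [P]: the signature Δ ⊇ P has
    the same types as P and symbols [ssym P + aux] (the auxiliary,
    intensional symbols [aux] with arities [aux_ar]). *)
Record program (P : signature) := Program {
  aux    : finType;
  aux_ar : aux -> seq (sty P);
  rules  : seq (rule (ssym P + aux) aux (sty P));
  out    : ssym P + aux;
  rules_wt : forall ru, List.In ru rules ->
      map (rvty ru) (rhead ru).2 = aux_ar (rhead ru).1 /\
      (forall a, List.In a (rbody ru) ->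
         match a with
         | ARel D xs => map (rvty ru) xs =
                          match D with inl R => sar R | inr x => aux_ar x end
         | AEq x y => rvty ru x = rvty ru y
         end)
}.

Definition dar (P : signature) (p : program P) (D : ssym P + aux p) : seq (sty P) :=
  match D with inl R => sar R | inr x => aux_ar x end.

Definition prog_ar (P : signature) (p : program P) : seq (sty P) := dar (out p).

Section DatalogSemantics.
Variables (P : signature) (A : structure P) (p : program P).

Definition dholds (I : aux p -> seq A -> Prop) (D : ssym P + aux p) (xs : seq A) : Prop :=
  match D with inl R => rel A R xs | inr x => I x xs end.

Definition atom_holds (I : aux p -> seq A -> Prop) n (v : 'I_n -> A)
    (a : atom (ssym P + aux p) n) : Prop :=
  match a with
  | ARel D xs => dholds I D (map v xs)
  | AEq x y => v x = v y
  end.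

Definition rules_closed (I : aux p -> seq A -> Prop) : Prop :=
  forall ru, List.In ru (rules p) ->
  forall v : 'I_(rn ru) -> A,
    (forall i, tp A (v i) = rvty ru i) ->
    (forall a, List.In a (rbody ru) -> atom_holds I v a) ->
    I (rhead ru).1 (map v (rhead ru).2).

Definition lfp (x : aux p) (xs : seq A) : Prop :=
  forall I, rules_closed I -> I x xs.

Definition prog_out (xs : seq A) : Prop := dholds lfp (out p) xs.
End DatalogSemantics.
Arguments dholds {P} A p I D xs.
Arguments atom_holds {P} A p I {n} v a.
Arguments rules_closed {P} A p I.
Arguments lfp {P} A p x xs.
Arguments prog_out {P} A p xs.

Record dinterp (P S : signature) := DInterp {
  dom_prog : sty S -> program P;
  rel_prog : ssym S -> program P;
  dinterp_ar : forall R,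
    prog_ar (rel_prog R) = flatten (map (fun t => prog_ar (dom_prog t)) (sar R))
}.

Section ApplyDinterp.
Variables (P S : signature) (phi : dinterp P S) (A : structure P).

Definition delem : Type :=
  { tw : sty S * seq A | prog_out A (dom_prog phi tw.1) tw.2 }.

Definition delem_tp (e : delem) : sty S := (sval e).1.

Definition delem_rel (R : ssym S) (es : seq delem) : Prop :=
  map delem_tp es = sar R /\
  prog_out A (rel_prog phi R) (flatten (map (fun e => (sval e).2) es)).

Lemma delem_rel_typed R es : delem_rel R es -> map delem_tp es = sar R.
Proof. by case. Qed.

Definition apply_dinterp : structure S :=
  @Structure S delem delem_tp delem_rel delem_rel_typed.
End ApplyDinterp.

From mathcomp Require Import all_boot zify.
From Stdlib Require Import ProofIrrelevance ClassicalEpsilon.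
From Stdlib Require List.

Set Implicit Arguments.
Unset Strict Implicit.
Unset Printing Implicit Defensive.

(** (1) Union gadgets compose by composing their type and symbol maps;
        the two structures then have the same carrier and the identity is
        an isomorphism.
    (2) Substitution.  Given φ : P → S and a program q over S, the program
        [subst_prog φ q] over P runs q "inside" φ(A): every S-variable of
        type t becomes a block of P-variables of arity ar(φ_t), S-symbols
        are replaced by the output symbols of the programs φ_R (whose rules
        are copied in), and each block is guarded by the domain program
        φ_t.  Its output is exactly the set of flattenings of the tuples
        output by q on φ(A) ([subst_prog_out]).  Applying this to every
        program of φ' gives the composite interpretation ψ.
    (3) Type refinement.  Given u : P → S and a program p over S, the
        program [refine_prog u p cs] over P outputs exactly the tuples
        output by p on υ(A) whose P-types are cs ([refine_prog_out]); its
        symbols are those of p annotated with the P-types of their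
        arguments.  The refined signature S' has as types the pairs of a
        T-type t and a P-type pattern for the elements of φ_t; the gadget
        υ' forgets the pattern and φ' computes φ with refined programs. *)

Lemma In_cat (X : Type) (x : X) (s t : seq X) :
  List.In x (s ++ t) <-> List.In x s \/ List.In x t.
Proof. elim: s => [|a s IH] /=; [tauto | rewrite IH; tauto]. Qed.

Lemma In_map (X Y : Type) (f : X -> Y) y (s : seq X) :
  List.In y (map f s) <-> exists x, List.In x s /\ f x = y.
Proof.
elim: s => [|a s IH] /=; first by split=> // -[x []].
rewrite IH; split.
- by case=> [<-|[x [H <-]]]; [exists a; auto | exists x; auto].
- by case=> x [[<-|H] <-]; [left | right; exists x].
Qed.

Lemma In_flatten (X : Type) (x : X) (ss : seq (seq X)) :
  List.In x (flatten ss) <-> exists s, List.In s ss /\ List.In x s.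
Proof.
elim: ss => [|s ss IH] /=; first by split=> // -[s []].
rewrite In_cat IH; split.
- by case=> [H|[t [H1 H2]]]; [exists s; auto | exists t; auto].
- by case=> t [[<-|H1] H2]; [left | right; exists t].
Qed.

Lemma In_enum (T : finType) (x : T) : List.In x (enum T).
Proof.
have : x \in enum T by rewrite mem_enum.
elim: (enum T) => [|a s IH] //=; rewrite inE => /orP [/eqP ->|/IH]; auto.
Qed.

Lemma In_filter (X : Type) (a : pred X) x s :
  List.In x (filter a s) <-> a x /\ List.In x s.
Proof.
elim: s => [|y s IH] /=; first tauto.
case: ifP => Hy /=; rewrite IH; split; try tauto.
- by case=> [<-|]; tauto.
- by case=> Hx [Exy|]; [subst; rewrite Hx in Hy | tauto].
Qed.

Lemma In_all (X : Type) (a : pred X) s :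
  all a s <-> forall x, List.In x s -> a x.
Proof.
elim: s => [|y s IH] //=; split.
- by case/andP=> Hy /IH Hs x [<-|/Hs].
- by move=> H; rewrite H /=; [apply/IH => x Hx; apply: H; right | left].
Qed.

Lemma sig_eq (X : Type) (Q : X -> Prop) (a b : {x | Q x}) : sval a = sval b -> a = b.
Proof. case: a b => [x px] [y py] /= E; subst y; f_equal; exact: proof_irrelevance. Qed.

Lemma seq_valuation (X : Type) n (w : seq X) :
  size w = n -> exists v : 'I_n -> X, map v (enum 'I_n) = w.
Proof.
case: w => [|a w] Hs.
- subst n; have v : 'I_0 -> X by case=> m; rewrite ltn0.
  by exists v; case: (enum 'I_0) (size_enum_ord 0).
- exists (fun i => nth a (a :: w) i).
  rewrite (@eq_map _ _ _ (nth a (a :: w) \o val)) // map_comp val_enum_ord -Hs.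
  exact: (mkseq_nth a (a :: w)).
Qed.

Lemma map_enum_inj (n : nat) (Y : Type) (f g : 'I_n -> Y) :
  map f (enum 'I_n) = map g (enum 'I_n) -> forall i, f i = g i.
Proof. by move/eq_in_map => H i; exact: H i (mem_enum _ i). Qed.

Lemma map_tnth_cast (X : Type) m (w : seq X) (H : m = size w) :
  map (fun j => tnth (in_tuple w) (cast_ord H j)) (enum 'I_m) = w.
Proof.
move: (H) => H'; subst m; rewrite (eq_irrelevance H' (erefl (size w))).
rewrite -[RHS](map_tnth_enum (in_tuple w)); apply: eq_map => j.
by rewrite cast_ord_id.
Qed.

Lemma map_eq_zip (X Y : Type) (f : X -> Y) (s t : seq X) a b :
  map f s = map f t -> List.In (a, b) (zip s t) -> f a = f b.
Proof. elim: s t => [|x s IH] [|y t] //= [E1 E2] [[<- <-]|H] //; exact: IH E2 H. Qed.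

Lemma zip_map_eq (X Y : Type) (f : X -> Y) (s t : seq X) :
  size s = size t -> (forall a b, List.In (a, b) (zip s t) -> f a = f b) ->
  map f s = map f t.
Proof.
elim: s t => [|x s IH] [|y t] //= [Hs] H; rewrite (H x y (or_introl erefl)) (IH t) //.
by move=> a b Hab; apply: H; right.
Qed.

Lemma cat_inj (X : Type) (s1 s2 s3 s4 : seq X) :
  size s1 = size s3 -> s1 ++ s2 = s3 ++ s4 -> s1 = s3 /\ s2 = s4.
Proof. by elim: s1 s3 => [|a s1 IH] [|b s3] //= [Hs] [-> /(IH _ Hs) [-> ->]]. Qed.

Lemma pmap_nth_none (X : Type) (s : seq X) k m : (size s <= m)%N ->
  pmap id [seq nth None (map Some s) i | i <- iota m k] = [::].
Proof.
elim: k m => [|k IH] m Hm //=; rewrite nth_default ?size_map //=; exact: IH (leqW Hm).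
Qed.

Lemma flatten_map_flatten (X Y : Type) (f : X -> seq Y) (ss : seq (seq X)) :
  flatten (map f (flatten ss)) = flatten (map (fun s => flatten (map f s)) ss).
Proof. by elim: ss => //= s ss IH; rewrite map_cat flatten_cat IH. Qed.

Definition sym_ar (P : signature) (X : Type) (ar : X -> seq (sty P))
    (D : ssym P + X) : seq (sty P) :=
  match D with inl R => sar R | inr x => ar x end.

Definition body_wt (P : signature) (X Y : Type) (ar : X -> seq (sty P))
    (ru : rule (ssym P + X) Y (sty P)) : Prop :=
  forall a, List.In a (rbody ru) ->
    match a with
    | ARel D xs => map (rvty ru) xs = sym_ar ar D
    | AEq x y => rvty ru x = rvty ru y
    end.

Definition rule_wt (P : signature) (X : Type) (ar : X -> seq (sty P))
    (ru : rule (ssym P + X) X (sty P)) : Prop :=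
  map (rvty ru) (rhead ru).2 = ar (rhead ru).1 /\ body_wt ar ru.

Definition pass_rule (D X T : Type) (cs : seq T) (h : X) (b : D) : rule D X T :=
  @Rule D X T (size cs) (tnth (in_tuple cs)) (h, enum 'I_(size cs))
        [:: ARel b (enum 'I_(size cs))].

Lemma pass_rule_ty (T : Type) (cs : seq T) :
  map (tnth (in_tuple cs)) (enum 'I_(size cs)) = cs.
Proof. exact: (map_tnth_enum (in_tuple cs)). Qed.

Lemma pass_rule_body_wt (P : signature) (X Y : Type) (ar : X -> seq (sty P))
    (h : Y) (D : ssym P + X) : body_wt ar (pass_rule (sym_ar ar D) h D).
Proof. by move=> a [<-|//] /=; rewrite pass_rule_ty. Qed.

Section LeastFixedPoint.
Variables (P : signature) (A : structure P) (p : program P).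

Lemma lfp_least I : rules_closed A p I -> forall x xs, lfp A p x xs -> I x xs.
Proof. by move=> HI x xs H; apply: H. Qed.

Lemma lfp_closed : rules_closed A p (lfp A p).
Proof.
move=> ru Hru v Hv Hb I HI; apply: (HI ru Hru v Hv) => a Ha.
have := Hb a Ha; case: a Ha => [D xs|x y] //= _; case: D => //= x H; exact: H I HI.
Qed.

Lemma lfp_typed x xs : lfp A p x xs -> map (tp A) xs = aux_ar x.
Proof.
apply: (@lfp_least (fun x xs => map (tp A) xs = aux_ar x)).
move=> ru Hru v Hv _; rewrite -map_comp (@eq_map _ _ _ (rvty ru) Hv).
exact: (rules_wt Hru).1.
Qed.

Lemma prog_out_typed xs : prog_out A p xs -> map (tp A) xs = prog_ar p.
Proof.
rewrite /prog_out /prog_ar; case: (out p) => [R|x] /=; [exact: rel_typed | exact: lfp_typed].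
Qed.

Lemma lfp_pass_rule cs h b w :
  List.In (pass_rule cs h b) (rules p) -> map (tp A) w = cs ->
  dholds A p (lfp A p) b w -> lfp A p h w.
Proof.
move=> Hin Hty Hb.
have Hsize : size w = size cs by rewrite -Hty size_map.
have [v Hv] := seq_valuation Hsize.
have := @lfp_closed _ Hin v; rewrite /= Hv; apply.
- apply: map_enum_inj; by rewrite map_comp Hv Hty pass_rule_ty.
- by move=> a [<-|//] /=; rewrite Hv.
Qed.
End LeastFixedPoint.

Section Embedding.
Variables (P : signature) (p : program P) (X : Type) (e : aux p -> X).

Definition emb_sym (D : ssym P + aux p) : ssym P + X :=
  match D with inl R => inl R | inr y => inr (e y) end.

Definition emb_atom n (a : atom (ssym P + aux p) n) : atom (ssym P + X) n :=
  match a with ARel D xs => ARel (emb_sym D) xs | AEq x y => AEq _ x y end.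

Definition emb_rule (r : rule (ssym P + aux p) (aux p) (sty P)) : rule (ssym P + X) X (sty P) :=
  @Rule _ _ _ (rn r) (rvty r) (e (rhead r).1, (rhead r).2) (map (@emb_atom _) (rbody r)).

Section Arities.
Variables (ar : X -> seq (sty P)) (ar_emb : forall y, ar (e y) = aux_ar y).

Lemma sym_ar_emb D : sym_ar ar (emb_sym D) = dar D.
Proof. by case: D => //= y; rewrite ar_emb. Qed.

Lemma emb_rule_wt r : List.In r (rules p) -> rule_wt ar (emb_rule r).
Proof.
move=> Hr; have [Hh Hb] := rules_wt Hr; split; first by rewrite /= ar_emb.
move=> a' /In_map [a [Ha <-]]; have := Hb a Ha.
by case: a Ha => [D xs|x y] _ //= ->; rewrite sym_ar_emb.
Qed.
End Arities.
End Embedding.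

Section EmbeddingSemantics.
Variables (P : signature) (A : structure P) (p q : program P) (e : aux p -> aux q).
Hypothesis emb_in : forall r, List.In r (rules p) -> List.In (emb_rule e r) (rules q).

Lemma lfp_emb y w : lfp A p y w -> lfp A q (e y) w.
Proof.
move: y w; apply: (@lfp_least P A p (fun y w => lfp A q (e y) w)).
move=> r Hr v Hv Hb; apply: (@lfp_closed P A q _ (emb_in Hr) v Hv).
move=> a' /In_map [a [Ha <-]].
by have := Hb a Ha; case: a Ha => [[R0|x] xs|x y] _.
Qed.

Lemma prog_out_emb w : prog_out A p w -> dholds A q (lfp A q) (emb_sym e (out p)) w.
Proof. rewrite /prog_out; case: (out p) => [R0|y] //=; exact: lfp_emb. Qed.

Lemma emb_rule_sound (J : aux q -> seq A -> Prop) :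
  (forall y w, J (e y) w -> lfp A p y w) ->
  forall r, List.In r (rules p) ->
  forall v : 'I_(rn r) -> A, (forall i, tp A (v i) = rvty r i) ->
  (forall a, List.In a (rbody (emb_rule e r)) -> atom_holds A q J v a) ->
  lfp A p (rhead r).1 (map v (rhead r).2).
Proof.
move=> HJ r Hr v Hv Hb; apply: (lfp_closed Hr Hv) => a Ha.
have := Hb _ (proj2 (In_map _ _ _) (ex_intro _ a (conj Ha erefl))).
by case: a Ha => [[R0|y] xs|x y] _ //= /HJ.
Qed.
End EmbeddingSemantics.

(** * (1) Composition of union gadgets *)

Definition gadget_comp (P S T : signature) (u : gadget P S) (u' : gadget S T) :
    gadget P T.
Proof.
refine (@Gadget P T (fun s => gd u' (gd u s)) (fun R => gr u' (gr u R)) _).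
by move=> R; rewrite !gar -map_comp.
Defined.

(** υ'(υ(A)) and (υ' ∘ υ)(A) have the same carrier and typing; a symbol
    holds of a tuple in both iff some symbol of P over it does. *)
Lemma gadget_comp_iso (P S T : signature) (u : gadget P S) (u' : gadget S T)
    (A : structure P) :
  iso (apply_gadget (gadget_comp u u') A) (apply_gadget u' (apply_gadget u A)).
Proof.
exists id, id; do 3 split => //.
move=> R xs; rewrite map_id; split.
- by case=> R0 [<- H]; exists (gr u R0); split => //; exists R0.
- by case=> R1 [<- [R0 [<- H]]]; exists R0.
Qed.

(** * (2) Substituting a Datalog interpretation into a program *)

Section Substitution.
Variables (P S : signature) (phi : dinterp P S) (q : program S).
Local Notation ardom t := (prog_ar (dom_prog phi t)).

(** Auxiliary symbols of the substituted program: the symbols of q, a goal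
    symbol for the output of q, and the auxiliary symbols of the programs
    φ_R and φ_t, whose rules are copied in. *)
Definition subst_aux : finType :=
  ((aux q + unit) +
   ({R : ssym S & aux (rel_prog phi R)} + {t : sty S & aux (dom_prog phi t)}))%type.

Definition subst_ar (a : subst_aux) : seq (sty P) :=
  match a with
  | inl (inl x) => flatten (map (fun t => ardom t) (aux_ar x))
  | inl (inr _) => flatten (map (fun t => ardom t) (prog_ar q))
  | inr (inl (existT R y)) => aux_ar y
  | inr (inr (existT t y)) => aux_ar y
  end.

Definition goal_tag (x : aux q) : subst_aux := inl (inl x).
Definition out_tag : subst_aux := inl (inr tt).
Definition rel_tag R (y : aux (rel_prog phi R)) : subst_aux := inr (inl (existT _ R y)).
Definition dom_tag t (y : aux (dom_prog phi t)) : subst_aux := inr (inr (existT _ t y)).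

(** The translation of a rule of q: each variable i of type t becomes the
    block of variables [block i], one per position of φ_t. *)
Section SubstRule.
Variables (X : Type) (hs : X -> subst_aux) (ru : rule (ssym S + aux q) X (sty S)).

Definition bvar : finType := {i : 'I_(rn ru) & 'I_(size (ardom (rvty ru i)))}.

Definition bvar_ty (k : 'I_#|bvar|) : sty P :=
  tnth (in_tuple (ardom (rvty ru (tag (enum_val k))))) (tagged (enum_val k)).

Definition block (i : 'I_(rn ru)) : seq 'I_#|bvar| :=
  map (fun j => enum_rank (existT (fun i => 'I_(size (ardom (rvty ru i)))) i j))
      (enum 'I_(size (ardom (rvty ru i)))).

Definition blocks (xs : seq 'I_(rn ru)) : seq 'I_#|bvar| := flatten (map block xs).

Definition subst_sym (D : ssym S + aux q) : ssym P + subst_aux :=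
  match D with
  | inl R => emb_sym (@rel_tag R) (out (rel_prog phi R))
  | inr x => inr (goal_tag x)
  end.

Definition subst_atom (a : atom (ssym S + aux q) (rn ru)) : seq (atom (ssym P + subst_aux) #|bvar|) :=
  match a with
  | ARel D xs => [:: ARel (subst_sym D) (blocks xs)]
  | AEq x y => map (fun ab => AEq _ ab.1 ab.2) (zip (block x) (block y))
  end.

(** Each block must be an element of φ(A), i.e. lie in the output of φ_t. *)
Definition guard_atoms : seq (atom (ssym P + subst_aux) #|bvar|) :=
  map (fun i => ARel (emb_sym (@dom_tag (rvty ru i)) (out (dom_prog phi (rvty ru i)))) (block i))
      (enum 'I_(rn ru)).

Definition subst_rule : rule (ssym P + subst_aux) subst_aux (sty P) :=
  @Rule _ _ _ #|bvar| bvar_ty (hs (rhead ru).1, blocks (rhead ru).2)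
    (flatten (map subst_atom (rbody ru)) ++ guard_atoms).

Lemma block_ty i : map bvar_ty (block i) = ardom (rvty ru i).
Proof.
rewrite -map_comp -[RHS](map_tnth_enum (in_tuple (ardom (rvty ru i)))).
by apply: eq_map => j /=; rewrite /bvar_ty enum_rankK.
Qed.

Lemma blocks_ty xs :
  map bvar_ty (blocks xs) = flatten (map (fun t => ardom t) (map (rvty ru) xs)).
Proof.
rewrite /blocks map_flatten -!map_comp; congr flatten.
by apply: eq_map => i /=; rewrite block_ty.
Qed.

Lemma subst_rule_wt (har : X -> seq (sty S)) :
  map (rvty ru) (rhead ru).2 = har (rhead ru).1 ->
  body_wt (@aux_ar S q) ru ->
  subst_ar (hs (rhead ru).1) = flatten (map (fun t => ardom t) (har (rhead ru).1)) ->
  rule_wt subst_ar subst_rule.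
Proof.
move=> Hh Hb Hhs; split; first by rewrite /= blocks_ty Hh Hhs.
move=> a' /In_cat [/In_flatten [s [/In_map [a [Ha <-]] Ha']]|/In_map [i [_ <-]]].
- have := Hb a Ha; case: a Ha Ha' => [D xs|x y] _ /=.
  + case=> [<-|//] H; rewrite blocks_ty H; case: D H => [R|x] H //=.
    by rewrite (@sym_ar_emb _ _ _ (@rel_tag R)) // -/(prog_ar _) dinterp_ar.
  + move=> /In_map [[a b] [Hab <-]] H /=.
    by apply: (map_eq_zip (f := bvar_ty)) Hab; rewrite !block_ty H.
- by rewrite block_ty (@sym_ar_emb _ _ _ (@dom_tag (rvty ru i))).
Qed.
End SubstRule.

(** [goal(x_1,...,x_n) <- out_q(x_1,...,x_n)]: its translation collects the
    output of q into the goal symbol. *)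
Definition out_pass : rule (ssym S + aux q) unit (sty S) := pass_rule (prog_ar q) tt (out q).

Definition subst_rules : seq (rule (ssym P + subst_aux) subst_aux (sty P)) :=
  map (subst_rule goal_tag) (rules q) ++
  [:: subst_rule (fun _ => out_tag) out_pass] ++
  flatten (map (fun R => map (emb_rule (@rel_tag R)) (rules (rel_prog phi R))) (enum (ssym S))) ++
  flatten (map (fun t => map (emb_rule (@dom_tag t)) (rules (dom_prog phi t))) (enum (sty S))).

Lemma In_subst_rules ru' : List.In ru' subst_rules ->
  (exists ru, List.In ru (rules q) /\ ru' = subst_rule goal_tag ru) \/
  ru' = subst_rule (fun _ => out_tag) out_pass \/
  (exists R r, List.In r (rules (rel_prog phi R)) /\ ru' = emb_rule (@rel_tag R) r) \/
  (exists t r, List.In r (rules (dom_prog phi t)) /\ ru' = emb_rule (@dom_tag t) r).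
Proof.
rewrite /subst_rules !In_cat !In_flatten.
case=> [/In_map [ru [H <-]]|[[<-|//]|[[s [/In_map [R [_ <-]] /In_map [r [H <-]]]]|
        [s [/In_map [t [_ <-]] /In_map [r [H <-]]]]]]].
- by left; exists ru.
- by right; left.
- by right; right; left; exists R, r.
- by right; right; right; exists t, r.
Qed.

Lemma subst_wt ru' : List.In ru' subst_rules -> rule_wt subst_ar ru'.
Proof.
case/In_subst_rules => [[ru [H ->]]|[->|[[R [r [H ->]]]|[t [r [H ->]]]]]].
- by have [Hh Hb] := rules_wt H; apply: (subst_rule_wt (har := @aux_ar S q)).
- apply: (subst_rule_wt (har := fun _ => prog_ar q)) => //=; first exact: pass_rule_ty.
  exact (@pass_rule_body_wt S (aux q) unit (@aux_ar S q) tt (out q)).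
- exact: (emb_rule_wt (ar := subst_ar)).
- exact: (emb_rule_wt (ar := subst_ar)).
Qed.

Definition subst_prog : program P :=
  @Program P subst_aux subst_ar subst_rules (inr out_tag) subst_wt.

Lemma rel_copy_in R r : List.In r (rules (rel_prog phi R)) ->
  List.In (emb_rule (@rel_tag R) r) (rules subst_prog).
Proof.
move=> Hr; rewrite /= /subst_rules !In_cat; right; right; left; apply/In_flatten.
exists (map (emb_rule (@rel_tag R)) (rules (rel_prog phi R))); split; last by apply/In_map; exists r.
by apply/In_map; exists R; split => //; exact: In_enum.
Qed.

Lemma dom_copy_in t r : List.In r (rules (dom_prog phi t)) ->
  List.In (emb_rule (@dom_tag t) r) (rules subst_prog).
Proof.
move=> Hr; rewrite /= /subst_rules !In_cat; right; right; right; apply/In_flatten.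
exists (map (emb_rule (@dom_tag t)) (rules (dom_prog phi t))); split; last by apply/In_map; exists r.
by apply/In_map; exists t; split => //; exact: In_enum.
Qed.

Variable A : structure P.
Local Notation B := (apply_dinterp phi A).

Definition flat (ws : seq B) : seq A := flatten (map (fun e => (sval e).2) ws).

Lemma size_delem (e : B) : size (sval e).2 = size (ardom (sval e).1).
Proof. by rewrite -(prog_out_typed (proj2_sig e)) size_map. Qed.

(** A tuple of elements of φ(A) is determined by its types and its
    flattening, since each element's length is fixed by its type. *)
Lemma flat_inj (ws1 ws2 : seq B) :
  map (tp B) ws1 = map (tp B) ws2 -> flat ws1 = flat ws2 -> ws1 = ws2.
Proof.
elim: ws1 ws2 => [|e1 ws1 IH] [|e2 ws2] //= [H1 H2] H.
have Hs : size (sval e1).2 = size (sval e2).2.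
  by rewrite !size_delem; congr (size (prog_ar (dom_prog phi _))).
have [E1 E2] := cat_inj Hs H.
rewrite (IH ws2 H2 E2); congr cons; apply: sig_eq.
by move: H1 E1; rewrite /tp /= /delem_tp; case: (sval e1) => ? ?; case: (sval e2) => ? ? /= -> ->.
Qed.

Lemma flat_blocks X (ru : rule (ssym S + aux q) X (sty S)) (vB : 'I_(rn ru) -> B) vA xs :
  (forall i, (sval (vB i)).2 = map vA (@block X ru i)) ->
  flat (map vB xs) = map vA (blocks xs).
Proof.
move=> H; rewrite /flat /blocks map_flatten -!map_comp; congr flatten.
by apply: eq_map => i /=; exact: H.
Qed.

(** The intended meaning of the auxiliary symbols: goal symbols hold of
    flattenings of facts derived by q on φ(A), copied symbols of the
    facts derived by the respective programs on A. *)
Definition subst_cand (a : subst_aux) (w : seq A) : Prop :=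
  match a with
  | inl (inl x) => exists ws, flat ws = w /\ lfp B q x ws
  | inl (inr _) => exists ws, flat ws = w /\ prog_out B q ws
  | inr (inl (existT R y)) => lfp A (rel_prog phi R) y w
  | inr (inr (existT t y)) => lfp A (dom_prog phi t) y w
  end.

Lemma subst_rule_sound X (hs : X -> subst_aux) (ru : rule (ssym S + aux q) X (sty S)) :
  body_wt (@aux_ar S q) ru ->
  forall vA : 'I_#|bvar ru| -> A,
  (forall a, List.In a (rbody (subst_rule hs ru)) -> atom_holds A subst_prog subst_cand vA a) ->
  exists vB : 'I_(rn ru) -> B, (forall i, delem_tp (vB i) = rvty ru i) /\
     (forall i, (sval (vB i)).2 = map vA (block i)) /\
     (forall a, List.In a (rbody ru) -> atom_holds B q (lfp B q) vB a).
Proof.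
move=> Hwt vA Hb.
have Hdom i : prog_out A (dom_prog phi (rvty ru i)) (map vA (block i)).
  have := Hb _ (proj2 (In_cat _ _ _) (or_intror (proj2 (In_map _ _ _)
                 (ex_intro _ i (conj (In_enum i) erefl))))).
  by rewrite /prog_out; case: (out (dom_prog phi (rvty ru i))).
pose vB i : B := exist _ (rvty ru i, map vA (block i)) (Hdom i).
exists vB; split => //; split => // a Ha.
have Hta a' : List.In a' (subst_atom a) -> atom_holds A subst_prog subst_cand vA a'.
  move=> Ha'; apply: Hb; apply/In_cat; left; apply/In_flatten.
  by exists (subst_atom a); split => //; apply/In_map; exists a.
have Hfl xs : flat (map vB xs) = map vA (blocks xs) by apply: flat_blocks.
have := Hwt a Ha; case: a Ha Hta => [[R|x] xs|x y] _ Hta /= H.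
- have /= Hout := Hta _ (or_introl erefl); split; first by rewrite -map_comp.
  by rewrite -/(flat _) Hfl /prog_out; move: Hout; case: (out (rel_prog phi R)).
- have [ws [Hws Hl]] := Hta _ (or_introl erefl).
  suff <- : ws = map vB xs by [].
  apply: flat_inj; last by rewrite Hws Hfl.
  by rewrite (lfp_typed Hl) -map_comp.
- apply: sig_eq => /=; congr pair; first exact: H.
  apply: zip_map_eq.
    by rewrite -(size_map (@bvar_ty _ ru) (block x)) block_ty
               -(size_map (@bvar_ty _ ru) (block y)) block_ty H.
  move=> a b Hab.
  exact: (Hta (AEq _ a b) (proj2 (In_map _ _ _) (ex_intro _ (a, b) (conj Hab erefl)))).
Qed.

Lemma subst_cand_closed : rules_closed A subst_prog subst_cand.
Proof.
move=> ru' /In_subst_rules [[ru [Hru ->]]|[->|[[R [r [Hr ->]]]|[t [r [Hr ->]]]]]] v Hv Hb.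
- have [vB [HvB [Hblk Hbody]]] := subst_rule_sound (rules_wt Hru).2 Hb.
  exists (map vB (rhead ru).2); split; first exact: flat_blocks.
  exact: (@lfp_closed S B q ru Hru vB HvB Hbody).
- have Hwt := @pass_rule_body_wt S (aux q) unit (@aux_ar S q) tt (out q).
  have [vB [_ [Hblk Hbody]]] := subst_rule_sound Hwt Hb.
  exists (map vB (enum 'I_(size (prog_ar q)))); split; first exact: flat_blocks.
  exact: (Hbody _ (or_introl erefl)).
- exact: (@emb_rule_sound P A (rel_prog phi R) subst_prog (@rel_tag R) subst_cand _ r Hr v Hv Hb).
- exact: (@emb_rule_sound P A (dom_prog phi t) subst_prog (@dom_tag t) subst_cand _ r Hr v Hv Hb).
Qed.

Lemma subst_rule_complete X (hs : X -> subst_aux) (ru : rule (ssym S + aux q) X (sty S)) :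
  List.In (subst_rule hs ru) (rules subst_prog) ->
  forall vB : 'I_(rn ru) -> B, (forall i, delem_tp (vB i) = rvty ru i) ->
  (forall a, List.In a (rbody ru) ->
     atom_holds B q (fun x ws => lfp A subst_prog (goal_tag x) (flat ws)) vB a) ->
  lfp A subst_prog (hs (rhead ru).1) (flat (map vB (rhead ru).2)).
Proof.
move=> Hin vB Hv Hb.
have Hs i : size (ardom (rvty ru i)) = size (sval (vB i)).2 by rewrite size_delem -Hv.
pose vA (k : 'I_#|bvar ru|) : A :=
  tnth (in_tuple (sval (vB (tag (enum_val k)))).2)
       (cast_ord (Hs (tag (enum_val k))) (tagged (enum_val k))).
have Hblk i : map vA (block i) = (sval (vB i)).2.
  rewrite -map_comp -[RHS](map_tnth_cast (Hs i)); apply: eq_map => j /=.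
  by rewrite /vA enum_rankK.
have Hfl xs : flat (map vB xs) = map vA (blocks xs) by apply: flat_blocks => i; rewrite Hblk.
have Hty k : tp A (vA k) = bvar_ty k.
  have Hk : k \in block (tag (enum_val k)).
    rewrite -{1}[k]enum_valK; case: (enum_val k) => i0 j /=; apply: map_f; exact: mem_enum.
  have Hm : map (tp A \o vA) (block (tag (enum_val k))) =
            map (@bvar_ty _ ru) (block (tag (enum_val k))).
    rewrite map_comp Hblk block_ty (prog_out_typed (proj2_sig (vB _))).
    by rewrite -/(delem_tp _) Hv.
  by move/eq_in_map: Hm => /(_ k Hk).
rewrite Hfl; apply: (@lfp_closed P A subst_prog _ Hin vA Hty).
move=> a' /In_cat [/In_flatten [s [/In_map [a [Ha <-]] Ha']]|/In_map [i [_ <-]]].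
- have := Hb a Ha; case: a Ha Ha' => [[R|x] xs|x y] _ /=.
  + move=> [<-|//] [_ H] /=; rewrite -Hfl.
    exact: (prog_out_emb (@rel_copy_in R) H).
  + by move=> [<-|//] H /=; rewrite -Hfl.
  + move=> /In_map [[a b] [Hab <-]] H /=.
    by apply: (map_eq_zip (f := vA)) Hab; rewrite !Hblk H.
- rewrite /= Hblk; apply: (prog_out_emb (@dom_copy_in _)).
  by rewrite -Hv; exact: (proj2_sig (vB i)).
Qed.

Lemma lfp_subst x ws : lfp B q x ws -> lfp A subst_prog (goal_tag x) (flat ws).
Proof.
move: x ws; apply: lfp_least => ru Hru vB Hv Hb.
apply: (subst_rule_complete (hs := goal_tag)) => //.
by rewrite /= /subst_rules In_cat; left; apply/In_map; exists ru.
Qed.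

Lemma subst_prog_out w :
  prog_out A subst_prog w <-> exists ws, flat ws = w /\ prog_out B q ws.
Proof.
split; first exact: (lfp_least subst_cand_closed (x := out_tag)).
move=> [ws [<- Hpo]].
have Hs : size ws = size (prog_ar q) by rewrite -(prog_out_typed Hpo) size_map.
have [vB HvB] := seq_valuation Hs.
have Hv : forall i, delem_tp (vB i) = tnth (in_tuple (prog_ar q)) i.
  by apply: map_enum_inj; rewrite map_comp HvB pass_rule_ty (prog_out_typed Hpo).
have := @subst_rule_complete _ (fun _ => out_tag) out_pass _ vB Hv.
rewrite /= HvB; apply.
- by rewrite /= /subst_rules In_cat; right; left.
- move=> a [<-|//] /=; rewrite HvB; move: Hpo; rewrite /prog_out.
  case: (out q) => [R|x] //=; exact: lfp_subst.
Qed.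
End Substitution.

Section InterpComposition.
Variables (P S T : signature) (phi : dinterp P S) (phi' : dinterp S T).

Lemma interp_comp_ar R : prog_ar (subst_prog phi (rel_prog phi' R)) =
  flatten (map (fun t => prog_ar (subst_prog phi (dom_prog phi' t))) (sar R)).
Proof. by rewrite /prog_ar /= -/(prog_ar _) dinterp_ar flatten_map_flatten -map_comp. Qed.

Definition interp_comp : dinterp P T :=
  @DInterp P T (fun t => subst_prog phi (dom_prog phi' t))
               (fun R => subst_prog phi (rel_prog phi' R)) interp_comp_ar.

Variable A : structure P.
Local Notation B := (apply_dinterp phi A).
Local Notation flat := (@flat P S phi A).

Lemma flat_flatten (ss : seq (seq B)) : flat (flatten ss) = flatten (map flat ss).
Proof. by elim: ss => //= s ss <-; rewrite /flat map_cat flatten_cat. Qed.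

(** An element of ψ(A) is a flattening of an element of φ'(φ(A)); we pick
    that (unique) preimage. *)
Definition unflat (e : delem interp_comp A) :=
  constructive_indefinite_description _ (proj1 (subst_prog_out _ _ _) (proj2_sig e)).

Definition to_comp (e : delem interp_comp A) : delem phi' B :=
  exist _ ((sval e).1, proj1_sig (unflat e)) (proj2 (proj2_sig (unflat e))).

Lemma of_comp_pf (c : delem phi' B) :
  prog_out A (dom_prog interp_comp (sval c).1) (flat (sval c).2).
Proof. by apply/subst_prog_out; exists (sval c).2; split => //; exact: (proj2_sig c). Qed.

Definition of_comp (c : delem phi' B) : delem interp_comp A :=
  exist _ ((sval c).1, flat (sval c).2) (@of_comp_pf c).

Lemma to_comp_flat e : flat (sval (to_comp e)).2 = (sval e).2.
Proof. exact: proj1 (proj2_sig (unflat e)). Qed.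

Lemma flat_to_comp es :
  flat (flatten (map (fun e => (sval e).2) (map to_comp es))) =
  flatten (map (fun e => (sval e).2) es).
Proof.
rewrite flat_flatten -!map_comp; congr flatten; apply: eq_map => e /=.
exact: to_comp_flat.
Qed.

(** Relations correspond: the output of ψ_R on A is the flattening of the
    output of φ'_R on φ(A), and the flattening is injective on well-typed
    tuples. *)
Lemma to_comp_rel R es :
  map (delem_tp (A := A)) es = sar R ->
  prog_out A (rel_prog interp_comp R) (flatten (map (fun e => (sval e).2) es)) <->
  prog_out B (rel_prog phi' R) (flatten (map (fun e => (sval e).2) (map to_comp es))).
Proof.
move=> Hty; split => Hpo; last first.
  by apply/subst_prog_out; eexists; split; [exact: flat_to_comp | exact: Hpo].
have [ws0 [Hws0 Hpo0]] := proj1 (subst_prog_out _ _ _) Hpo.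
suff <- : ws0 = flatten (map (fun e => (sval e).2) (map to_comp es)) by [].
apply: flat_inj; last by rewrite Hws0 flat_to_comp.
rewrite (prog_out_typed Hpo0) dinterp_ar map_flatten -Hty -!map_comp; congr flatten.
by apply: eq_map => e /=; rewrite (prog_out_typed (proj2_sig (to_comp e))).
Qed.

Lemma interp_comp_iso : iso (apply_dinterp interp_comp A) (apply_dinterp phi' B).
Proof.
exists to_comp, of_comp; split; [|split; [|split]].
- by move=> e; apply: sig_eq => /=; rewrite to_comp_flat; case: (sval e).
- move=> c; apply: sig_eq => /=.
  have [Hfl Hpo] := proj2_sig (unflat (of_comp c)).
  rewrite [in RHS](surjective_pairing (sval c)); congr pair.
  apply: flat_inj => //.
  by rewrite (prog_out_typed Hpo) (prog_out_typed (proj2_sig c)).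
- by [].
- move=> R es; rewrite /= /delem_rel -map_comp /=.
  by split=> -[Hty Hpo]; split => //; apply/(to_comp_rel Hty).
Qed.
End InterpComposition.

(** * (3) Refining a program along a union gadget *)

Section Refinement.
Variables (P S : signature) (u : gadget P S) (p : program S) (cs : seq (sty P)).

(** Sequences of P-types of length at most [key_len] are encoded as
    elements of a finite type; key_len bounds all arities that occur. *)
Definition key_len : nat :=
  (\max_(x : aux p) size (aux_ar x) + \max_(R : ssym S) size (sar R)
   + \max_(R : ssym P) size (sar R) + size cs)%N.

Local Notation Key := {ffun 'I_key_len -> option (sty P)}.

Definition key (s : seq (sty P)) : Key := [ffun i : 'I_key_len => nth None (map Some s) i].
Definition decode (k : Key) : seq (sty P) := pmap id [seq k i | i <- enum 'I_key_len].

Lemma keyK s : (size s <= key_len)%N -> decode (key s) = s.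
Proof.
move=> Hs; rewrite /decode /key.
rewrite (@eq_map _ _ _ (nth None (map Some s) \o val)); last by move=> i; rewrite ffunE.
rewrite map_comp val_enum_ord -(subnKC Hs) iotaD map_cat add0n pmap_cat.
have -> : [seq nth None [seq Some i | i <- s] i | i <- iota 0 (size s)] = map Some s.
  by rewrite -{1}(size_map Some s); exact: mkseq_nth.
rewrite pmap_nth_none //.
by elim: s {Hs} => [|a s IH] //=; rewrite IH.
Qed.

Lemma key_len_dar (D : ssym S + aux p) : (size (dar D) <= key_len)%N.
Proof.
rewrite /key_len; case: D => [R|x] /=.
- have := @leq_bigmax _ (fun R : ssym S => size (sar R)) R; lia.
- have := @leq_bigmax _ (fun x : aux p => size (aux_ar x)) x; lia.
Qed.

Lemma key_len_sym (R0 : ssym P) : (size (sar R0) <= key_len)%N.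
Proof. rewrite /key_len; have := @leq_bigmax _ (fun R : ssym P => size (sar R)) R0; lia. Qed.

Lemma key_len_cs : (size cs <= key_len)%N.
Proof. rewrite /key_len; lia. Qed.

(** Auxiliary symbols of the refined program: symbols of p (auxiliary or
    of S) annotated with the P-types of their arguments, and a goal. *)
Definition refine_aux : finType := ((aux p * Key) + (ssym S * Key) + unit)%type.

Definition refine_ar (a : refine_aux) : seq (sty P) :=
  match a with
  | inl (inl (_, k)) => decode k
  | inl (inr (_, k)) => decode k
  | inr _ => cs
  end.

Definition refine_sym (D : ssym S + aux p) (k : Key) : ssym P + refine_aux :=
  match D with
  | inl R => inr (inl (inr (R, k)))
  | inr x => inr (inl (inl (x, k)))
  end.

Definition refine_atom n (c : 'I_n -> sty P) (a : atom (ssym S + aux p) n) :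
    atom (ssym P + refine_aux) n :=
  match a with
  | ARel D xs => ARel (refine_sym D (key (map c xs))) xs
  | AEq x y => AEq _ x y
  end.

(** The instance of a rule of p for a choice c of P-types of its variables. *)
Definition refine_rule (ru : rule (ssym S + aux p) (aux p) (sty S))
    (c : {ffun 'I_(rn ru) -> sty P}) : rule (ssym P + refine_aux) refine_aux (sty P) :=
  @Rule _ _ _ (rn ru) c
    (inl (inl ((rhead ru).1, key (map c (rhead ru).2))), (rhead ru).2)
    (map (refine_atom c) (rbody ru)).

Definition admissible (ru : rule (ssym S + aux p) (aux p) (sty S))
    (c : {ffun 'I_(rn ru) -> sty P}) : bool :=
  [forall i, gd u (c i) == rvty ru i] &&
  all (fun a => if a is AEq x y then c x == c y else true) (rbody ru).

Definition input_rule (R0 : ssym P) : rule (ssym P + refine_aux) refine_aux (sty P) :=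
  pass_rule (sar R0) (inl (inr (gr u R0, key (sar R0)))) (inl R0).

Definition goal_rule : rule (ssym P + refine_aux) refine_aux (sty P) :=
  pass_rule cs (inr tt) (refine_sym (out p) (key cs)).

Definition refine_rules : seq (rule (ssym P + refine_aux) refine_aux (sty P)) :=
  flatten (map (fun ru => map (@refine_rule ru) (filter (@admissible ru)
                 (enum {ffun 'I_(rn ru) -> sty P}))) (rules p))
  ++ map input_rule (enum (ssym P)) ++ [:: goal_rule].

Lemma In_refine_rules ru' : List.In ru' refine_rules ->
  (exists ru c, [/\ List.In ru (rules p), @admissible ru c & ru' = @refine_rule ru c])
  \/ (exists R0, ru' = input_rule R0) \/ ru' = goal_rule.
Proof.
rewrite /refine_rules !In_cat In_flatten In_map /=.
case=> [[s [/In_map [ru [Hru <-]] /In_map [c [/In_filter [Hc _] <-]]]]|[[R0 [_ <-]]|[<-|//]]].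
- by left; exists ru, c.
- by right; left; exists R0.
- by right; right.
Qed.

Lemma refine_rule_in ru c : List.In ru (rules p) -> @admissible ru c ->
  List.In (@refine_rule ru c) refine_rules.
Proof.
move=> Hru Hc; apply/In_cat; left; apply/In_flatten.
exists (map (@refine_rule ru) (filter (@admissible ru) (enum {ffun 'I_(rn ru) -> sty P}))).
split; first by apply/In_map; exists ru.
by apply/In_map; exists c; split => //; apply/In_filter; split => //; exact: In_enum.
Qed.

Lemma refine_rule_wt ru c : List.In ru (rules p) -> @admissible ru c ->
  rule_wt refine_ar (@refine_rule ru c).
Proof.
move=> Hru /andP [_ Hc]; have [Hh Hb] := rules_wt Hru; split.
- rewrite /= keyK // size_map.
  by have := key_len_dar (inr (rhead ru).1); rewrite /= -Hh size_map.
- move=> a' /In_map [a [Ha <-]]; have := Hb a Ha; have := proj1 (In_all _ _) Hc a Ha.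
  case: a Ha => [D xs|x y] _ /= => [_ H|/eqP //].
  have Hs : (size xs <= key_len)%N by have := key_len_dar D; rewrite /dar -H size_map.
  by case: D H => [R|x] _ /=; rewrite keyK // size_map.
Qed.

Lemma refine_wt ru : List.In ru refine_rules -> rule_wt refine_ar ru.
Proof.
move=> /In_refine_rules [[ru' [c [Hru Hc ->]]]|[[R0 ->]|->]].
- exact: refine_rule_wt.
- split; first by rewrite /= pass_rule_ty keyK // key_len_sym.
  by move=> a [<-|//] /=; rewrite pass_rule_ty.
- split; first by rewrite /= pass_rule_ty.
  move=> a [<-|//] /=; rewrite pass_rule_ty.
  by case: (out p) => [R|x] /=; rewrite keyK // key_len_cs.
Qed.

Definition refine_prog : program P :=
  @Program P refine_aux refine_ar refine_rules (inr (inr tt)) refine_wt.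

Variable A : structure P.
Local Notation B := (apply_gadget u A).

(** Intended meaning: an annotated symbol holds of the tuples of A on which
    the symbol holds in υ(A) and whose P-types are the annotation. *)
Definition refine_cand (a : refine_aux) (w : seq A) : Prop :=
  match a with
  | inl (inl (x, k)) => lfp B p x w /\ map (tp A) w = decode k
  | inl (inr (R, k)) => rel B R w /\ map (tp A) w = decode k
  | inr _ => prog_out B p w /\ map (tp A) w = cs
  end.

Lemma refine_cand_sym D k w : dholds A refine_prog refine_cand (refine_sym D k) w <->
  dholds B p (lfp B p) D w /\ map (tp A) w = decode k.
Proof. by case: D. Qed.

Lemma refine_cand_closed : rules_closed A refine_prog refine_cand.
Proof.
move=> ru' /In_refine_rules [[ru [c [Hru Hc ->]]]|[[R0 ->]|->]] v Hv Hb.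
- have [Hh _] := rules_wt Hru.
  move/andP: (Hc) => [/forallP Hc1 _]; split.
  + apply: (@lfp_closed S B p ru Hru v).
    * by move=> i /=; rewrite Hv; apply/eqP; exact: Hc1.
    * move=> a Ha.
      have := Hb (refine_atom c a) (proj2 (In_map _ _ _) (ex_intro _ a (conj Ha erefl))).
      by case: a Ha => [D xs|x y] _ //= /refine_cand_sym [].
  + rewrite /= keyK; first by elim: (rhead ru).2 => //= a l ->; rewrite Hv.
    by have := key_len_dar (inr (rhead ru).1); rewrite /= -Hh !size_map.
- have /= H := Hb _ (or_introl erefl); split; first by exists R0.
  by rewrite keyK ?key_len_sym // (rel_typed H).
- have /= /refine_cand_sym [H1 H2] := Hb _ (or_introl erefl); split => //.
  by rewrite H2 keyK // key_len_cs.
Qed.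

Lemma lfp_refine_input R w : rel B R w ->
  lfp A refine_prog (inl (inr (R, key (map (tp A) w)))) w.
Proof.
case=> R0 [<- H]; rewrite (rel_typed H).
apply: (@lfp_pass_rule P A refine_prog (sar R0) _ (inl R0)) => //; last exact: rel_typed H.
rewrite /= /refine_rules !In_cat; right; left.
by apply/In_map; exists R0; split => //; exact: In_enum.
Qed.

(** Every fact derived by p on υ(A) is derived, annotated with its types,
    by the refined program: the rule instance for the types of the
    valuation applies. *)
Lemma lfp_refine x w : lfp B p x w ->
  lfp A refine_prog (inl (inl (x, key (map (tp A) w)))) w.
Proof.
move: x w; apply: lfp_least => ru Hru v Hv Hb.
pose c : {ffun 'I_(rn ru) -> sty P} := [ffun i => tp A (v i)].
have Hc : @admissible ru c.
  apply/andP; split; first by apply/forallP => i; rewrite ffunE; apply/eqP; exact: Hv.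
  apply/In_all => a Ha; have := Hb a Ha.
  by case: a Ha => [D xs|x y] _ //= H; rewrite !ffunE H.
have Hmc l : map (tp A) (map v l) = map c l by elim: l => //= a l ->; rewrite ffunE.
have := @lfp_closed P A refine_prog _ (refine_rule_in Hru Hc) v; rewrite /= Hmc; apply.
- by move=> i; rewrite ffunE.
- move=> a' /In_map [a [Ha <-]]; have := Hb a Ha.
  case: a Ha => [[R|x] xs|x y] _ //=.
  + by move/lfp_refine_input; rewrite Hmc.
  + by rewrite Hmc.
Qed.

Lemma refine_prog_out w :
  prog_out A refine_prog w <-> prog_out B p w /\ map (tp A) w = cs.
Proof.
split; first exact: (lfp_least refine_cand_closed (x := inr tt)).
move=> [H1 H2].
apply: (@lfp_pass_rule P A refine_prog cs (inr tt) (refine_sym (out p) (key cs))) => //.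
- by rewrite /= /refine_rules !In_cat; right; right; left.
- move: H1; rewrite /prog_out; case: (out p) => [R|x] /= H.
  + by move/lfp_refine_input: H; rewrite H2.
  + by move/lfp_refine: H; rewrite H2.
Qed.
End Refinement.

Section RefinedInterp.
Variables (P S T : signature) (u : gadget P S) (phi : dinterp S T).

Local Notation ardom t := (prog_ar (dom_prog phi t)).

(** The refined signature S': a type is a T-type t together with a
    P-type for each position of φ_t; a symbol is a T-symbol R together
    with refined types over its arity. *)
Definition ref_ty : finType := {t : sty T & (size (ardom t)).-tuple (sty P)}.
Definition ref_sym_pre : finType := {R : ssym T & (size (sar R)).-tuple ref_ty}.
Definition ref_sym : finType := {x : ref_sym_pre | map tag (tagged x) == sar (tag x)}.
Definition ref_sig : signature := @Signature ref_ty ref_sym (fun x => tagged (val x)).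

Definition pattern (e : ref_ty) : seq (sty P) := tagged e.

Lemma forget_ar (R : ssym ref_sig) : sar (tag (val R)) = map tag (sar R).
Proof. exact: esym (eqP (valP R)). Qed.

Definition forget : gadget ref_sig T := @Gadget ref_sig T (fun e => tag e) (fun R => tag (val R)) forget_ar.

Definition ref_interp : dinterp P ref_sig :=
  @DInterp P ref_sig (fun e => refine_prog u (dom_prog phi (tag e)) (pattern e))
    (fun x => refine_prog u (rel_prog phi (tag (val x))) (flatten (map pattern (sar x))))
    (fun x => erefl).

Variable A : structure P.
Local Notation B := (apply_gadget u A).

Lemma to_ref_pf (e : delem ref_interp A) : prog_out B (dom_prog phi (tag (sval e).1)) (sval e).2.
Proof. by move: (proj2_sig e) => /refine_prog_out []. Qed.

Definition to_ref (e : delem ref_interp A) : delem phi B :=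
  exist _ (tag (sval e).1, (sval e).2) (@to_ref_pf e).

Lemma to_ref_ty (e : delem ref_interp A) : map (tp A) (sval e).2 = pattern (sval e).1.
Proof. by move: (proj2_sig e) => /refine_prog_out []. Qed.

Lemma ref_of_size (e : delem phi B) : size (map (tp A) (sval e).2) == size (ardom (sval e).1).
Proof. by apply/eqP; rewrite -(prog_out_typed (proj2_sig e)) !size_map. Qed.

Definition ref_of (e : delem phi B) : ref_ty := existT _ (sval e).1 (Tuple (ref_of_size e)).

Lemma of_ref_pf (e : delem phi B) : prog_out A (dom_prog ref_interp (ref_of e)) (sval e).2.
Proof. by apply/refine_prog_out; split => //; exact: (proj2_sig e). Qed.

Definition of_ref (e : delem phi B) : delem ref_interp A :=
  exist _ (ref_of e, (sval e).2) (@of_ref_pf e).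

Lemma to_refK : cancel to_ref of_ref.
Proof.
move=> e; apply: sig_eq => /=.
have := @to_ref_ty e; case: e => [[[t k] w] pf] /= Hk; congr (_, _).
by congr (existT _ t _); apply: val_inj => /=; exact: Hk.
Qed.

Lemma of_refK : cancel of_ref to_ref.
Proof. by case=> [[t w] pf]; apply: sig_eq. Qed.

Lemma to_ref_rel R es : rel (apply_gadget forget (apply_dinterp ref_interp A)) R es ->
  rel (apply_dinterp phi B) R (map to_ref es).
Proof.
case=> x [<- [Hty Hpo]]; split.
- by rewrite /= forget_ar -Hty -!map_comp.
- by move: Hpo => /refine_prog_out [+ _]; rewrite -map_comp.
Qed.

Lemma of_ref_rel R es : rel (apply_dinterp phi B) R (map to_ref es) ->
  rel (apply_gadget forget (apply_dinterp ref_interp A)) R es.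
Proof.
case=> Hty Hpo.
have Hty' : map tag (map (delem_tp (A := A)) es) = sar R by rewrite -Hty -!map_comp.
have Hsz : size (map (delem_tp (A := A)) es) == size (sar R) by rewrite -Hty' !size_map.
have Hm : map tag (Tuple Hsz) == sar R by apply/eqP.
exists (exist (fun x : ref_sym_pre => map tag (tagged x) == sar (tag x)) (existT _ R _) Hm).
split => //; split => //.
apply/refine_prog_out; split; first by move: Hpo; rewrite -map_comp.
rewrite map_flatten -!map_comp /=; congr flatten; apply: eq_map => e /=.
exact: to_ref_ty.
Qed.

Lemma ref_interp_iso :
  iso (apply_gadget forget (apply_dinterp ref_interp A)) (apply_dinterp phi B).
Proof.
exists to_ref, of_ref; split; [exact: to_refK | split; [exact: of_refK | split=> //]].
by move=> R es; split; [exact: to_ref_rel | exact: of_ref_rel].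
Qed.
End RefinedInterp.

Theorem mainTheorem2 :
  (* (1) composition of union gadgets *)
  (forall (P S T : signature) (u : gadget P S) (u' : gadget S T),
     exists mu : gadget P T,
       forall A : structure P,
         iso (apply_gadget mu A) (apply_gadget u' (apply_gadget u A))) /\
  (* (2) composition of Datalog interpretations *)
  (forall (P S T : signature) (phi : dinterp P S) (phi' : dinterp S T),
     exists psi : dinterp P T,
       forall A : structure P,
         iso (apply_dinterp psi A) (apply_dinterp phi' (apply_dinterp phi A))) /\
  (* (3) commuting a union gadget past a Datalog interpretation *)
  (forall (P S T : signature) (u : gadget P S) (phi : dinterp S T),
     exists (S' : signature) (u' : gadget S' T) (phi' : dinterp P S'),
       forall A : structure P,
         iso (apply_gadget u' (apply_dinterp phi' A))
             (apply_dinterp phi (apply_gadget u A))).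
Proof.
split; [|split].
- move=> P S T u u'; exists (gadget_comp u u'); exact: gadget_comp_iso.
- move=> P S T phi phi'; exists (interp_comp phi phi'); exact: interp_comp_iso.
- move=> P S T u phi; exists (ref_sig P phi), (forget P phi), (ref_interp u phi).
  exact: ref_interp_iso.
Qed.
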